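(* For every $n\ge 4$, $\beta(P_{2\infty}\,\Box\, K_n)=n-1$, and $S=\{(0,0),(1,1),(2,2),\dots,(n-2,n-2)\}$ is a metric basis of $P_{2\infty}\,\Box\, K_n$.
   Context: $P_{2\infty}$ has vertex set $\mathbb Z$ with $i,j$ adjacent iff $|i-j|=1$. $K_n$ is the complete graph on vertex set $\{0,1,\dots,n-1\}$. The cartesian product $G\Box H$ has vertex set $V(G)\times V(H)$, where $(a,v)$ is adjacent to $(b,w)$ iff either $a=b$ and $vw\in E(H)$, or $v=w$ and $ab\in E(G)$. A vertex $x$ resolves $u,v$ if $d(u,x)\ne d(v,x)$ (shortest-path distance); a resolving set is a set of vertices resolving every pair of distinct vertices; $\beta$ is the minimum cardinality of a resolving set ($\infty$ if none is finite), and a metric basis is a resolving set of cardinality $\beta$. *)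

From mathcomp Require Import all_boot all_order all_algebra.
Set Implicit Arguments. Unset Strict Implicit. Unset Printing Implicit Defensive.

Definition P2inf_adj (i j : int) : Prop := (i = j + 1)%R \/ (j = i + 1)%R.

Definition Kn_adj (n : nat) (v w : 'I_n) : Prop := v <> w.

Definition cartesian (A B : Type) (g : A -> A -> Prop) (h : B -> B -> Prop)
  (x y : A * B) : Prop :=
  (x.1 = y.1 /\ h x.2 y.2) \/ (x.2 = y.2 /\ g x.1 y.1).

Inductive walk (V : Type) (adj : V -> V -> Prop) : V -> V -> nat -> Prop :=
| walk_nil x : walk adj x x 0
| walk_cons x y z k : adj x y -> walk adj y z k -> walk adj x z k.+1.

Definition is_dist (V : Type) (adj : V -> V -> Prop) (u v : V) (k : nat) : Prop :=
  walk adj u v k /\ forall j, j < k -> ~ walk adj u v j.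

Definition resolves (V : Type) (adj : V -> V -> Prop) (x u v : V) : Prop :=
  exists k1 k2, [/\ is_dist adj u x k1, is_dist adj v x k2 & k1 <> k2].

Definition resolving (V : eqType) (adj : V -> V -> Prop) (W : seq V) : Prop :=
  forall u v : V, u <> v -> exists2 x, x \in W & resolves adj x u v.

(* beta(G) = k (finite): some resolving set of cardinality k, and every
   finite resolving set has cardinality >= k (infinite ones trivially do). *)
Definition metric_dim_is (V : eqType) (adj : V -> V -> Prop) (k : nat) : Prop :=
  (exists W : seq V, [/\ uniq W, size W = k & resolving adj W]) /\
  (forall W : seq V, uniq W -> resolving adj W -> k <= size W).

Definition metric_basis (V : eqType) (adj : V -> V -> Prop) (W : seq V) : Prop :=
  [/\ uniq W, resolving adj W &
      forall W' : seq V, uniq W' -> resolving adj W' -> size W <= size W'].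

Definition PKn_adj (n : nat) : int * 'I_n -> int * 'I_n -> Prop :=
  cartesian P2inf_adj (@Kn_adj n).

Definition diagS (n : nat) : seq (int * 'I_n) :=
  [seq (Posz (nat_of_ord i), i) | i <- enum 'I_n & nat_of_ord i < n.-1].

(* 1. Distance.  In P_{2oo} □ K_n the distance between (a,v) and (b,w) is
      |a - b| + [v <> w]: every edge changes this quantity by at most one,
      and a walk of exactly that length is obtained by one step inside the
      copy of K_n followed by a straight run along the column.  Hence x
      resolves u, v iff the two values of this formula differ.
   2. Lower bound.  Two vertices (0,v), (0,w) whose columns v, w contain no
      landmark are at distance |c| + 1 from every landmark (c, z), so they are
      not resolved: a resolving set meets all columns but at most one, hence
      has at least n - 1 elements.
   3. Upper bound.  For S, the landmarks (0,0), (1,1), (2,2) already force two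
      vertices with equal distance vectors to lie on the same level; on one
      level the landmarks (k,k), k < n-1, detect the column exactly. *)
From mathcomp Require Import all_boot all_order all_algebra zify.
Import GRing.Theory.

Section Distance.
Variable n : nat.

Definition pdist (x y : int * 'I_n) : nat :=
  `|(x.1 - y.1)%R|%N + (x.2 != y.2).

Lemma pdist_edge z x y : PKn_adj x y -> pdist x z <= (pdist y z).+1.
Proof.
rewrite /pdist; case=> [[-> _] | [-> [-> | ->]]]; first by case: (_ != _); lia.
all: case: (_ != _); lia.
Qed.

Lemma walk_pdist_lb x y k : walk (@PKn_adj n) x y k -> pdist x y <= k.
Proof.
elim=> {x y k} [x | x y z k xy _ IH]; first by rewrite /pdist subrr eqxx.
by have := pdist_edge z x y xy; lia.
Qed.

Lemma walk_column m (a b : int) (v : 'I_n) :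
  `|(a - b)%R|%N = m -> walk (@PKn_adj n) (a, v) (b, v) m.
Proof.
elim: m a => [|m IH] a ab.
  have -> : a = b by lia.
  exact: walk_nil.
have [a_lt_b | b_le_a] := boolP (a < b)%R.
  apply: (@walk_cons _ _ _ ((a + 1)%R, v)); first by right; split=> //; right.
  by apply: IH; lia.
apply: (@walk_cons _ _ _ ((a - 1)%R, v)).
  by right; split=> //; left; rewrite /= subrK.
by apply: IH; lia.
Qed.

Lemma walk_pdist x y : walk (@PKn_adj n) x y (pdist x y).
Proof.
case: x y => a v [b w]; rewrite /pdist /=.
have [-> | v_ne_w] := eqVneq v w; first by rewrite /= addn0; apply: walk_column.
rewrite /= addn1; apply: (@walk_cons _ _ _ (a, w)).
  by left; split=> //; apply/eqP.
exact: walk_column.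
Qed.

Lemma is_distE x y k : is_dist (@PKn_adj n) x y k <-> k = pdist x y.
Proof.
split=> [[w_k k_min] | ->].
  apply/eqP; rewrite eqn_leq walk_pdist_lb // andbT leqNgt.
  by apply/negP => /k_min; apply; apply: walk_pdist.
split=> [|j j_lt /walk_pdist_lb]; first exact: walk_pdist.
by rewrite leqNgt j_lt.
Qed.

Lemma resolvesE x u v :
  resolves (@PKn_adj n) x u v <-> pdist u x <> pdist v x.
Proof.
split=> [[k1 [k2 [/is_distE -> /is_distE ->]]] // | ne].
by exists (pdist u x), (pdist v x); split=> //; apply/is_distE.
Qed.

End Distance.

Arguments pdist {n}.

Lemma size_almost_covering (T : finType) (C : seq T) :
  (forall v w, v \notin C -> w \notin C -> v = w) -> #|T|.-1 <= size C.
Proof.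
move=> missing_le1; pose A : {pred T} := [pred x | x \in C].
have out_le1 : #|[predC A]| <= 1.
  by apply/card_le1_eqP => v w; rewrite !inE => v_out w_out; apply: missing_le1.
have A_le : #|A| <= size C := card_size C.
have := cardC A; lia.
Qed.

(* Lower bound: any resolving set meets all columns of K_n but at most one. *)
Lemma resolving_size_lb n (W : seq (int * 'I_n)) :
  resolving (@PKn_adj n) W -> n.-1 <= size W.
Proof.
move=> W_res; rewrite -(size_map snd) -[n in n.-1]card_ord.
apply: size_almost_covering => v w v_free w_free.
apply/eqP/negPn/negP => v_ne_w.
have [x x_in /resolvesE] : exists2 x, x \in W & resolves (@PKn_adj n) x (0%R, v) (0%R, w).
  by apply: W_res; case=> /eqP; rewrite (negbTE v_ne_w).
have x_v : v != x.2 by apply: contraNneq v_free => ->; apply: map_f.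
have x_w : w != x.2 by apply: contraNneq w_free => ->; apply: map_f.
by rewrite /pdist /= x_v x_w.
Qed.

Lemma diagonal_levels (a b : int) (v w : nat) :
  (forall k, k < 3 -> `|(a - k%:Z)%R|%N + (v != k) = `|(b - k%:Z)%R|%N + (w != k)) ->
  a = b.
Proof. by move=> same; move: (same 0 isT) (same 1 isT) (same 2 isT); lia. Qed.

Lemma indicator_inj (v w m : nat) : v <= m -> w <= m ->
  (forall k, k < m -> (v != k) = (w != k)) -> v = w.
Proof.
move=> v_le w_le same.
have [v_lt | m_le_v] := ltnP v m.
  by move: (same v v_lt); rewrite eqxx => /esym/negbFE/eqP.
have [w_lt | m_le_w] := ltnP w m.
  by move: (same w w_lt); rewrite eqxx => /negbFE/eqP.
lia.
Qed.

Lemma diagS_uniq n : uniq (diagS n).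
Proof.
rewrite map_inj_uniq; first exact: filter_uniq (enum_uniq _).
by move=> i j [_].
Qed.

Lemma diagS_size n : size (diagS n) = n.-1.
Proof.
rewrite size_map -(size_map val) -(filter_map val (fun k => k < n.-1)) val_enum_ord.
by rewrite -[n.-1]add0n filter_iota_ltn ?leq_pred ?size_iota.
Qed.

Lemma mem_diagS {n} (i : 'I_n) : i < n.-1 -> (Posz i, i) \in diagS n.
Proof. by move=> i_lt; apply: map_f; rewrite mem_filter mem_enum i_lt. Qed.

Lemma diagS_resolving n : 4 <= n -> resolving (@PKn_adj n) (diagS n).
Proof.
move=> n_ge4 [a v] [b w] uv_ne.
have [/hasP [x x_in /eqP separates] | /hasPn same] :=
  boolP (has (fun x => pdist (a, v) x != pdist (b, w) x) (diagS n)).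
  by exists x => //; apply/resolvesE.
have same_at k : k < n.-1 ->
    `|(a - k%:Z)%R|%N + (val v != k) = `|(b - k%:Z)%R|%N + (val w != k).
  move=> k_lt; have k_ltn : k < n by lia.
  by move: (same _ (mem_diagS (Ordinal k_ltn) k_lt)); rewrite negbK => /eqP.
have ab : a = b by apply: diagonal_levels => k k_lt; apply: same_at; lia.
have vw : v = w.
  have [v_lt w_lt] : val v < n /\ val w < n := conj (ltn_ord v) (ltn_ord w).
  apply: val_inj; apply: (@indicator_inj _ _ n.-1); try lia.
  by move=> k /same_at; rewrite ab => /addnI; do 2 case: (_ != k).
by case: uv_ne; rewrite ab vw.
Qed.

Theorem proposition9 (n : nat) (hn : 4 <= n) :
  metric_dim_is (@PKn_adj n) (n - 1) /\ metric_basis (@PKn_adj n) (diagS n).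
Proof.
have S_res := diagS_resolving n hn.
split; first split.
- exists (diagS n); split; [exact: diagS_uniq | by rewrite diagS_size subn1 | exact: S_res].
- by move=> W _ W_res; rewrite subn1; apply: resolving_size_lb.
split; [exact: diagS_uniq | exact: S_res |].
by move=> W _ W_res; rewrite diagS_size; apply: resolving_size_lb.
Qed.
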